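(* Let $n\ge 6$ be even. (a) If $d_*$ and $d_*'$ are neighbors with $d_*\ne d_*'$, then $d_*$ and $d_*'$ are determined. (b) A Latin square $L$ of order $n$ with inner distance $\frac n2-1$ is a row product if and only if there exists $i\in[1,n-1]$ such that rows $i$ and $i+1$ of $L$ have the same difference row.
   Context: Symbols are $[1,n]$; $\mathrm{dist}(a,b)$ is the minimum of the residues of $a-b$ and $b-a$ mod $n$ (in $[0,n-1]$). A Latin row is a permutation $(s_1,\dots,s_n)$ of $[1,n]$; its inner distance is $\min_j\mathrm{dist}(s_j,s_{j+1})$; its difference row is $(h_1,\dots,h_{n-1})$ with $h_j\in[0,n-1]$, $h_j\equiv s_{j+1}-s_j\pmod n$, and its extended difference row is $d_*=(\epsilon_1,\dots,\epsilon_{n-1},h)$ with $\epsilon_j=h_j-\frac n2$ and $h=h_n-\frac n2$, where $h_n\in[0,n-1]$, $h_n\equiv s_1-s_n\pmod n$. A Latin rectangle is a matrix over $[1,n]$ with no repeats in rows or columns; its inner distance is the minimum of $\mathrm{dist}$ over symbols in horizontally or vertically adjacent cells. Two extended difference rows $d_*=(\epsilon_j)$ and $d_*'=(\epsilon'_j)$ of Latin rows of inner distance $\frac n2-1$ are neighbors if there are Latin rows $r,r'$ with these extended difference rows such that the $2\times n$ matrix with rows $r,r'$ is a Latin rectangle of inner distance $\frac n2-1$. They are determined if there exist $1\le j_1<j_2\le n$ with $\left|\sum_{j=j_1}^{j_2-1}(\epsilon'_j-\epsilon_j)\right|=2$. For a Latin square $L=(m_{i,j})$, $H$ is the $n\times(n-1)$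 matrix with $h_{i,j}\equiv m_{i,j+1}-m_{i,j}$ and $V$ the $(n-1)\times n$ matrix with $v_{i,j}\equiv m_{i+1,j}-m_{i,j}$ (mod $n$, in $[0,n-1]$). A row product is a Latin square obtained by adding a constant mod $n$ to all entries of $\mathrm{prod}(d,d')$, the $n\times n$ matrix with $1$ in cell $(1,1)$ whose $H$ has every row equal to a difference row $d$ and whose $V$ has every column equal to a difference row $d'$. *)

(* Symbols are the naturals 1..n; rows/columns are seqs. *)
From mathcomp Require Import all_boot all_order all_algebra.
Set Implicit Arguments. Unset Strict Implicit. Unset Printing Implicit Defensive.
Import GRing.Theory Num.Theory.

Definition dist (n a b : nat) : nat := minn ((a + n - b) %% n) ((b + n - a) %% n).

Definition latin_row (n : nat) (s : seq nat) : bool := perm_eq s (iota 1 n).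

Definition innerdist (n : nat) (s : seq nat) : nat :=
  \big[minn/n]_(j < (size s).-1) dist n (nth 0 s j) (nth 0 s j.+1).

Definition diffrow (n : nat) (s : seq nat) : seq nat :=
  mkseq (fun j => (nth 0 s j.+1 + n - nth 0 s j) %% n) (size s).-1.

Definition extdiff (n : nat) (s : seq nat) : seq int :=
  mkseq (fun j => (Posz (nth 0 (diffrow n s) j) - Posz n./2)%R) (n.-1)
  ++ [:: (Posz ((head 0 s + n - last 0 s) %% n) - Posz n./2)%R].

(* matrices are seqs of rows; column j *)
Definition col (L : seq (seq nat)) (j : nat) : seq nat := [seq nth 0 r j | r <- L].

Definition latin_rect (n : nat) (L : seq (seq nat)) : bool :=
  all (latin_row n) L && all (fun j => uniq (col L j)) (iota 0 n).

Definition latin_square (n : nat) (L : seq (seq nat)) : bool :=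
  (size L == n) && latin_rect n L.

Definition rect_innerdist (n : nat) (L : seq (seq nat)) : nat :=
  minn (\big[minn/n]_(r <- L) innerdist n r)
       (\big[minn/n]_(j < n) innerdist n (col L j)).

Definition is_edr (n : nat) (d : seq int) : Prop :=
  exists s, latin_row n s /\ innerdist n s = n./2 - 1 /\ extdiff n s = d.

Definition neighbors (n : nat) (d d' : seq int) : Prop :=
  exists r r', extdiff n r = d /\ extdiff n r' = d' /\
    latin_rect n [:: r; r'] /\ rect_innerdist n [:: r; r'] = n./2 - 1.

Definition determined (n : nat) (d d' : seq int) : Prop :=
  exists j1 j2 : nat, [/\ 1 <= j1, j1 < j2 & j2 <= n] /\
    `| (\sum_(j1 <= j < j2) (nth (0:int) d' j.-1 - nth (0:int) d j.-1))%R |%N = 2.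

Definition entry (L : seq (seq nat)) (i j : nat) : nat := nth 0 (nth [::] L i) j.

Definition is_prod (n : nat) (d d' : seq nat) (M : seq (seq nat)) : Prop :=
  [/\ size M = n,
      all (fun r => (size r == n) && all (fun x => (1 <= x <= n)) r) M,
      entry M 0 0 = 1,
      all (fun r => diffrow n r == d) M &
      all (fun j => diffrow n (col M j) == d') (iota 0 n)].

Definition is_diffrow (n : nat) (d : seq nat) : Prop :=
  exists s, latin_row n s /\ diffrow n s = d.

Definition row_product (n : nat) (L : seq (seq nat)) : Prop :=
  latin_square n L /\
  exists (d d' : seq nat) (M : seq (seq nat)) (c : nat),
    [/\ is_diffrow n d, is_diffrow n d', is_prod n d d' M &
        forall i j, i < n -> j < n -> entry L i j = entry M i j + c %[mod n]].

From Pilot Require Import Defs.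
From mathcomp Require Import all_boot all_algebra zify.
Set Implicit Arguments. Unset Strict Implicit. Unset Printing Implicit Defensive.
Import GRing.Theory.

(* Write h = n/2. Inner distance h - 1 forces every horizontal and vertical
   step, read mod n, into {h - 1, h, h + 1}. For two rows stacked in a Latin
   rectangle the vertical offsets v_j sum to 0 mod n, so either they are
   constant, and then one row is a translate of the other and the extended
   difference rows agree, or both h - 1 and h + 1 occur. Since the extended
   difference rows differ by v_(j+1) - v_j, the sum between two such columns
   telescopes to +-2: this is (a).
   For (b), equal difference rows in consecutive rows mean a constant vertical
   offset between them, and a constant offset between two consecutive rows
   propagates to the neighbouring pairs. An offset other than h is handled by
   the same sum argument; if the offset from row i to row i+1 is h, then row
   i+2 differs from row i by +-1 in every column, and a parity argument on the
   symbols shows that this sign is constant. So all consecutive rows differ by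
   constants, and L is a translate of
   prod(d, d') for the common difference rows d of its rows and d' of its
   columns. *)

Section LatinRow.
Variables (n : nat) (s : seq nat).
Hypothesis s_latin : latin_row n s.

Lemma latin_row_size : size s = n.
Proof. by rewrite (perm_size s_latin) size_iota. Qed.

Lemma latin_row_uniq : uniq s.
Proof. by rewrite (perm_uniq s_latin) iota_uniq. Qed.

Lemma latin_row_mem x : (x \in s) = (1 <= x <= n).
Proof. by rewrite (perm_mem s_latin) mem_iota add1n ltnS. Qed.

Lemma latin_row_nth j : j < n -> 1 <= nth 0 s j <= n.
Proof. by move=> jn; rewrite -latin_row_mem mem_nth // latin_row_size. Qed.

Lemma latin_row_nth_inj j k : j < n -> k < n -> nth 0 s j = nth 0 s k -> j = k.
Proof.
by move=> jn kn /eqP; rewrite nth_uniq ?latin_row_size ?latin_row_uniq // => /eqP.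
Qed.

Lemma latin_row_index x : 1 <= x <= n -> index x s < n /\ nth 0 s (index x s) = x.
Proof.
by move=> xn; rewrite -latin_row_size index_mem nth_index latin_row_mem.
Qed.

Lemma sum_latin_row : \sum_(j < n) nth 0 s j = \sum_(x <- iota 1 n) x.
Proof.
by rewrite -(big_mkord xpredT) -{1}latin_row_size -(big_nth 0 xpredT id) (perm_big _ s_latin).
Qed.

End LatinRow.

Lemma latin_row_of_uniq n s : size s = n -> uniq s -> (forall j, j < n -> 1 <= nth 0 s j <= n) ->
  latin_row n s.
Proof.
move=> sz s_uniq s_range.
have sub : {subset s <= iota 1 n}.
  by move=> x /(nthP 0) [j jn <-]; rewrite mem_iota add1n ltnS s_range -?sz.
have [_ s_eq] := uniq_min_size s_uniq sub (eq_leq (etrans (size_iota _ _) (esym sz))).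
exact: uniq_perm (iota_uniq _ _) s_eq.
Qed.

Lemma bigmin_seq_le (T : eqType) (L : seq T) (G : T -> nat) x r :
  r \in L -> \big[minn/x]_(t <- L) G t <= G r.
Proof.
elim: L => [//|t L IH]; rewrite inE big_cons => /orP[/eqP-> | rL].
  exact: geq_minl.
by rewrite geq_min IH ?orbT.
Qed.

Lemma bigmin_ord_le m (F : nat -> nat) x j : j < m -> \big[minn/x]_(i < m) F i <= F j.
Proof.
by move=> jm; rewrite -(big_mkord xpredT) bigmin_seq_le // mem_index_iota.
Qed.

(* b - a in Z/nZ, represented in [0, n): the difference row consists of steps
   and dist n a b = minn (step n b a) (step n a b). *)
Definition step (n a b : nat) : nat := (b + n - a) %% n.

Section Step.
Variable n : nat.

Lemma step_spec a b : 1 <= a <= n -> 1 <= b <= n ->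
  (a <= b /\ step n a b = b - a) \/ (b < a /\ step n a b = b + n - a).
Proof.
move=> ha hb; rewrite /step; case: (leqP a b) => ab; [left | right]; split=> //.
  by rewrite -addnBAC // modnDr modn_small //; lia.
by rewrite modn_small //; lia.
Qed.

Lemma step_addmod a b : a <= n -> a + step n a b = b %[mod n].
Proof. by move=> an; rewrite modnDmr addnBA ?addKn ?modnDr //; lia. Qed.

Lemma step_add a b c : a <= n -> b <= n -> step n a b + step n b c = step n a c %[mod n].
Proof.
move=> an bn; apply/eqP; rewrite -(eqn_modDl a); apply/eqP.
by rewrite addnA -modnDml step_addmod // modnDml step_addmod // step_addmod.
Qed.

Lemma step_of_eqmod a b c : a <= n -> b = a + c %[mod n] -> step n a b = c %% n.
Proof. by move=> an; rewrite -(step_addmod b an) => /eqP; rewrite eqn_modDl modn_mod => /eqP. Qed.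

Lemma eqmod_bounded x y : 1 <= x <= n -> 1 <= y <= n -> x = y %[mod n] -> x = y.
Proof.
case: x y => [|x] [|y] // hx hy; rewrite -[x.+1]addn1 -[y.+1]addn1 => /eqP.
by rewrite eqn_modDr !modn_small => [/eqP->| |] //; lia.
Qed.

Lemma eqmod_close x y : x = y %[mod n] -> x < y + n -> y < x + n -> x = y.
Proof.
move=> /eqP e xlt ylt; wlog xy : x y e xlt ylt / x <= y.
  move=> hwlog; case: (leqP x y) => [|/ltnW] le; first exact: hwlog.
  by symmetry; apply: hwlog; rewrite // eq_sym.
move: e; rewrite -(subnKC xy) -{1}[x]addn0 eqn_modDl mod0n modn_small; lia.
Qed.

Lemma eqmod_cases x y : x < n.*2 -> y < n.*2 -> x = y %[mod n] ->
  x = y \/ x = y + n \/ y = x + n.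
Proof.
move=> xlt ylt /eqP e; wlog xy : x y e xlt ylt / x <= y.
  move=> hwlog; case: (leqP x y) => [|/ltnW] le; first exact: hwlog.
  by have := hwlog y x; rewrite eq_sym; lia.
move: e; rewrite -(subnKC xy) -{1}[x]addn0 eqn_modDl mod0n eq_sym => /eqP k0.
have := divn_eq (y - x) n; rewrite k0 addn0.
have : (y - x) %/ n < 2 by rewrite ltn_divLR; lia.
by case: ((y - x) %/ n) => [|[|]] //; lia.
Qed.

Lemma step_lt a b : 0 < n -> step n a b < n.
Proof. exact: ltn_pmod. Qed.

Lemma step_square a b c d : a <= n -> b <= n -> c <= n ->
  step n a b + step n b d = step n a c + step n c d %[mod n].
Proof. by move=> an bn cn; rewrite !step_add. Qed.

Lemma odd_step a b : ~~ odd n -> 1 <= a <= n -> 1 <= b <= n -> odd (step n a b) = odd (a + b).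
Proof. by move=> n_even ha hb; have := step_spec ha hb; lia. Qed.

Lemma step_eq0 a b : 1 <= a <= n -> 1 <= b <= n -> (step n a b == 0) = (a == b).
Proof. by move=> ha hb; apply/eqP/eqP; have := step_spec ha hb; lia. Qed.

Lemma step_shift a b a' b' : 1 <= a <= n -> 1 <= b <= n -> 1 <= a' <= n -> 1 <= b' <= n ->
  step n a a' = step n b b' -> step n a b = step n a' b'.
Proof.
move=> ha hb ha' hb'.
have := step_spec ha hb; have := step_spec ha' hb'.
have := step_spec ha ha'; have := step_spec hb hb'; lia.
Qed.

Lemma step_sym a b : 1 <= a <= n -> 1 <= b <= n -> a <> b -> step n b a = n - step n a b.
Proof. by move=> ha hb; have := step_spec ha hb; have := step_spec hb ha; lia. Qed.

Lemma step_sum_n a b c d : a <= n -> c <= n -> step n a b + step n c d = n ->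
  b + d = a + c %[mod n].
Proof.
move=> an cn sum_n; rewrite -modnDm -(step_addmod b an) -(step_addmod d cn) modnDm.
by rewrite addnACA sum_n modnDr.
Qed.

End Step.

Definition offset (n : nat) (r r' : seq nat) (j : nat) : nat :=
  step n (nth 0 r j) (nth 0 r' j).

Definition constant_on (m : nat) (f : nat -> nat) : Prop := forall j, j < m -> f j = f 0.

Definition symbol_row (n : nat) (s : seq nat) : bool :=
  (size s == n) && all (fun x => 1 <= x <= n) s.

Lemma symbol_row_nth n s j : symbol_row n s -> j < n -> 1 <= nth 0 s j <= n.
Proof. by case/andP=> /eqP sz /allP s_range jn; rewrite s_range ?mem_nth ?sz. Qed.

Lemma latin_symbol_row n s : latin_row n s -> symbol_row n s.
Proof.
move=> s_latin; rewrite /symbol_row (latin_row_size s_latin) eqxx.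
by apply/allP=> x; rewrite (latin_row_mem s_latin).
Qed.

Lemma offset_add n r r' r'' j : symbol_row n r -> symbol_row n r' -> j < n ->
  offset n r r' j + offset n r' r'' j = offset n r r'' j %[mod n].
Proof.
move=> sr sr' jn; have /andP[_ rn] := symbol_row_nth sr jn.
have /andP[_ r'n] := symbol_row_nth sr' jn; exact: step_add.
Qed.

Lemma diffrow_eq_const_offset n r r' : symbol_row n r -> symbol_row n r' ->
  diffrow n r = diffrow n r' <-> constant_on n (offset n r r').
Proof.
move=> sr sr'; have /eqP szr := (andP sr).1; have /eqP szr' := (andP sr').1.
have nth_diffrow s j : size s = n -> j.+1 < n ->
    nth 0 (diffrow n s) j = step n (nth 0 s j) (nth 0 s j.+1).
  by move=> sz jn; rewrite nth_mkseq // sz; lia.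
have shift j : j.+1 < n ->
    step n (nth 0 r j) (nth 0 r j.+1) = step n (nth 0 r' j) (nth 0 r' j.+1) <->
    offset n r r' j = offset n r r' j.+1.
  move=> jn; rewrite /offset; split=> /step_shift; apply; apply: symbol_row_nth; lia.
split=> [eq_diff | const].
  elim=> [//|j IH] jn; rewrite -IH 1?ltnW //; symmetry; apply/shift => //.
  by rewrite -!nth_diffrow ?eq_diff.
apply: (@eq_from_nth _ 0) => [|j]; rewrite !size_mkseq ?szr ?szr' // => jn.
rewrite !nth_diffrow ?szr ?szr'; try lia.
by apply/shift; rewrite ?const //; lia.
Qed.

Lemma offset_swap n r r' j : symbol_row n r -> symbol_row n r' -> j < n ->
  nth 0 r j <> nth 0 r' j -> offset n r' r j = n - offset n r r' j.
Proof. by move=> sr sr' jn; apply: step_sym; apply: symbol_row_nth. Qed.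

Lemma const_offset_swap n r r' : symbol_row n r -> symbol_row n r' ->
  (forall j, j < n -> nth 0 r j <> nth 0 r' j) ->
  constant_on n (offset n r r') -> constant_on n (offset n r' r).
Proof.
move=> sr sr' neq const j jn; have n_pos : 0 < n by apply: leq_ltn_trans jn.
by rewrite (offset_swap sr sr' jn (neq j jn)) (offset_swap sr sr' n_pos (neq 0 n_pos)) const.
Qed.

(* The relabelling x |-> x - e + 1 (mod n), which sends e to 1. *)
Definition normalize (n e x : nat) : nat := (step n e x).+1.

Lemma normalize_range n e x : 0 < n -> 1 <= normalize n e x <= n.
Proof. by move=> n_pos; rewrite /normalize ltn_pmod. Qed.

Lemma normalize_eqmod n e x : 1 <= e <= n -> x = normalize n e x + (e - 1) %[mod n].
Proof.
case/andP=> e_pos en; rewrite /normalize -addn1 -addnA subnKC // addnC.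
by rewrite step_addmod.
Qed.

Lemma step_normalize n e x : 1 <= e <= n -> x <= n -> step n x (normalize n e x) = step n e 1.
Proof.
case/andP=> e_pos en xn; apply: step_of_eqmod => //.
rewrite -[in RHS]modnDml -(step_addmod x en) modnDml /normalize.
by rewrite (_ : e + _ + _ = (step n e x).+1 + n) ?modnDr //; lia.
Qed.

Lemma normalize_symbol_row n e s : 0 < n -> size s = n -> symbol_row n (map (normalize n e) s).
Proof.
move=> n_pos sz; rewrite /symbol_row size_map sz eqxx.
by apply/allP=> _ /mapP[x _ ->]; apply: normalize_range.
Qed.

Lemma diffrow_normalize n e s : 1 <= e <= n -> symbol_row n s ->
  diffrow n (map (normalize n e) s) = diffrow n s.
Proof.
move=> e_range ss; have /andP[/eqP sz _] := ss.
have n_pos : 0 < n by case/andP: e_range; apply: leq_trans.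
have sns := normalize_symbol_row e n_pos sz.
have s_le j : j < n -> nth 0 s j <= n by move=> jn; case/andP: (symbol_row_nth ss jn).
symmetry; apply/diffrow_eq_const_offset => // j jn.
by rewrite /offset !(nth_map 0) ?sz // !step_normalize ?s_le.
Qed.

Lemma sum_offset_latin n r r' : latin_row n r -> latin_row n r' ->
  n %| \sum_(j < n) offset n r r' j.
Proof.
move=> r_latin r'_latin; have := sum_latin_row r'_latin; rewrite -(sum_latin_row r_latin).
move=> sum_eq; rewrite /dvdn /offset /step modn_summ.
have -> : \sum_(j < n) (nth 0 r' j + n - nth 0 r j) = n * n.
  apply: (@addIn (\sum_(j < n) nth 0 r j)); rewrite -big_split /=.
  rewrite (eq_bigr (fun j : 'I_n => nth 0 r' j + n)) => [|j _]; last first.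
    by have := latin_row_nth r_latin (ltn_ord j); lia.
  by rewrite big_split /= sum_eq sum_nat_const card_ord addnC.
by rewrite modnMl.
Qed.

Lemma sum_window_const m b (F : nat -> nat) : (forall j, j < m -> b <= F j <= b.+1) ->
  m %| \sum_(j < m) F j -> forall j, j < m -> F j = F 0.
Proof.
move=> F_range; set T := \sum_(j < m) (F j - b).
have -> : \sum_(j < m) F j = T + m * b.
  rewrite -[m in m * b]card_ord -sum_nat_const -big_split; apply: eq_bigr => j _ /=.
  by have := F_range j (ltn_ord j); lia.
rewrite dvdn_addl ?dvdn_mulr // => m_T.
have : T <= \sum_(j < m) 1 by apply: leq_sum => j _; have := F_range j (ltn_ord j); lia.
rewrite sum_nat_const card_ord muln1 => T_le.
move=> j jm; have m_pos : 0 < m by lia.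
suff [c F_c] : exists c, forall i : 'I_m, F i - b = c.
  have := F_c (Ordinal jm); have := F_c (Ordinal m_pos) => /=.
  by have := F_range j jm; have := F_range 0 m_pos; lia.
have [T0|T_pos] := posnP T.
  move: T0 => /eqP; rewrite sum_nat_eq0 => /forallP T0.
  by exists 0; move=> i; apply/eqP/T0.
have F_le1 (i : 'I_m) : F i - b <= 1 by have := F_range i (ltn_ord i); lia.
have /forall_inP F_1 : [forall (i : 'I_m | true), F i - b == 1].
  rewrite -(leqif_sum (fun i _ => leqif_eq (F_le1 i))).2 sum_nat_const card_ord muln1.
  by rewrite eqn_leq T_le dvdn_leq.
by exists 1; move=> i; apply/eqP/F_1.
Qed.

Lemma sum_window_spread m a (F : nat -> nat) : (forall j, j < m -> a <= F j <= a + 2) ->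
  m %| \sum_(j < m) F j ->
  (forall j, j < m -> F j = F 0) \/
  (exists2 j, j < m & F j = a) /\ (exists2 j, j < m & F j = a + 2).
Proof.
move=> F_range m_sum.
have [/hasP[j1 + /eqP F1] | /hasPn no_a] := boolP (has (fun j => F j == a) (iota 0 m)).
  rewrite mem_iota => /= j1m.
  have [/hasP[j2 + /eqP F2] | /hasPn no_a2] := boolP (has (fun j => F j == a + 2) (iota 0 m)).
    by rewrite mem_iota => /= j2m; right; split; [exists j1 | exists j2].
  left; apply: (sum_window_const (b := a)) m_sum => j jm.
  by have := no_a2 j; rewrite mem_iota /= => /(_ jm); have := F_range j jm; lia.
left; apply: (sum_window_const (b := a.+1)) m_sum => j jm.
by have := no_a j; rewrite mem_iota /= => /(_ jm); have := F_range j jm; lia.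
Qed.

Definition near_half (n : nat) (s : seq nat) : Prop :=
  forall j, j.+1 < size s -> n./2 - 1 <= step n (nth 0 s j) (nth 0 s j.+1) <= n./2 + 1.

Section NearHalf.
Variable n : nat.
Hypotheses (n_even : ~~ odd n) (n_ge6 : 6 <= n).

Lemma dist_near_half a b : 1 <= a <= n -> 1 <= b <= n -> n./2 - 1 <= dist n a b ->
  n./2 - 1 <= step n a b <= n./2 + 1.
Proof.
move=> ha hb; rewrite /dist leq_min -/(step n b a) -/(step n a b).
by have := step_spec ha hb; have := step_spec hb ha; lia.
Qed.

Lemma innerdist_near_half (s : seq nat) : {in s, forall x, 1 <= x <= n} ->
  n./2 - 1 <= innerdist n s -> near_half n s.
Proof.
move=> s_range s_dist j js; apply: dist_near_half.
- by apply: s_range; rewrite mem_nth // ltnW.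
- by apply: s_range; rewrite mem_nth.
apply: leq_trans s_dist (bigmin_ord_le (fun j => dist n (nth 0 s j) (nth 0 s j.+1)) _ _).
by rewrite -ltnS prednK // (leq_trans _ js).
Qed.

Lemma rect_near_half L : latin_rect n L -> n./2 - 1 <= rect_innerdist n L ->
  {in L, forall r, near_half n r} /\ (forall j, j < n -> near_half n (Defs.col L j)).
Proof.
case/andP=> /allP L_latin _; rewrite leq_min => /andP[rows_dist cols_dist]; split.
  move=> r rL; apply: innerdist_near_half => [x|].
    by rewrite (latin_row_mem (L_latin r rL)).
  exact: leq_trans rows_dist (bigmin_seq_le _ _ rL).
move=> j jn; apply: innerdist_near_half => [x /mapP[r rL ->]|].
  exact: (latin_row_nth (L_latin r rL) jn).
exact: leq_trans cols_dist (bigmin_ord_le (fun j => innerdist n (Defs.col L j)) _ jn).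
Qed.

Lemma near_half_square a b c d : a <= n -> b <= n -> c <= n ->
  n./2 - 1 <= step n a b <= n./2 + 1 -> n./2 - 1 <= step n b d <= n./2 + 1 ->
  n./2 - 1 <= step n a c <= n./2 + 1 -> n./2 - 1 <= step n c d <= n./2 + 1 ->
  step n a b + step n b d = step n a c + step n c d.
Proof. by move=> an bn cn *; apply: (eqmod_close (n := n)); rewrite ?step_add //; lia. Qed.

End NearHalf.

Lemma nth_extdiff n r k : size r = n -> k.+1 < n ->
  nth 0%R (extdiff n r) k = (Posz (step n (nth 0%N r k) (nth 0%N r k.+1)) - Posz n./2)%R.
Proof.
move=> sz kn; rewrite nth_cat size_mkseq ifT; last lia.
by rewrite nth_mkseq 1?nth_mkseq ?sz //; lia.
Qed.

Lemma extdiff_eq_const_offset n r r' : 0 < n -> symbol_row n r -> symbol_row n r' ->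
  constant_on n (offset n r r') -> extdiff n r = extdiff n r'.
Proof.
move=> n_pos sr sr' const; rewrite /extdiff (diffrow_eq_const_offset sr sr').2 //.
have /eqP szr := (andP sr).1; have /eqP szr' := (andP sr').1.
have last_step s : size s = n -> (head 0 s + n - last 0 s) %% n = step n (nth 0 s n.-1) (nth 0 s 0).
  by move=> sz; rewrite -nth0 -sz nth_last.
rewrite !last_step //; congr (_ ++ [:: (Posz _ - _)%R]).
have last_lt : n.-1 < n by rewrite ltn_predL.
apply: step_shift; rewrite ?(symbol_row_nth sr) ?(symbol_row_nth sr') //.
exact: const _ last_lt.
Qed.

Section NeighborRows.
Variables (n : nat) (r r' : seq nat).
Hypotheses (n_even : ~~ odd n) (n_ge6 : 6 <= n).
Hypotheses (r_latin : latin_row n r) (r'_latin : latin_row n r').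
Hypotheses (r_near : near_half n r) (r'_near : near_half n r').
Hypothesis offset_near : forall j, j < n -> n./2 - 1 <= offset n r r' j <= n./2 + 1.

Lemma extdiff_sub_offset k : k.+1 < n ->
  (nth 0 (extdiff n r') k - nth 0 (extdiff n r) k)%R =
  (Posz (offset n r r' k.+1) - Posz (offset n r r' k))%R.
Proof.
move=> kn; have sz := latin_row_size r_latin; have sz' := latin_row_size r'_latin.
have bound s j : latin_row n s -> j < n -> nth 0 s j <= n.
  by move=> s_latin jn; case/andP: (latin_row_nth s_latin jn).
have := near_half_square n_even n_ge6 (bound r k r_latin (ltnW kn)) (bound r k.+1 r_latin kn)
  (bound r' k r'_latin (ltnW kn)) (@r_near k _) (offset_near kn) (offset_near (ltnW kn))
  (@r'_near k _).
rewrite !nth_extdiff // sz sz' /offset; lia.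
Qed.

Lemma determined_of_offset_gap k1 k2 : k1 < k2 < n ->
  offset n r r' k2 = offset n r r' k1 + 2 \/ offset n r r' k1 = offset n r r' k2 + 2 ->
  determined n (extdiff n r) (extdiff n r').
Proof.
move=> /andP[k12 k2n] gap; exists k1.+1, k2.+1; split; first by split; lia.
rewrite big_add1 /= (telescope_sumr_eq (fun k => Posz (offset n r r' k)) _ (ltnW k12)).
  by case: gap => ->; [rewrite distnEl | rewrite distnEr]; rewrite ?leq_addr //; lia.
move=> k /andP[_ kk2]; apply: extdiff_sub_offset; lia.
Qed.

Lemma determined_or_const_offset :
  determined n (extdiff n r) (extdiff n r') \/ constant_on n (offset n r r').
Proof.
have window j : j < n -> n./2 - 1 <= offset n r r' j <= n./2 - 1 + 2.
  by move=> jn; have := offset_near jn; lia.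
case: (sum_window_spread window (sum_offset_latin r_latin r'_latin)) => [|]; first by right.
move=> [[j1 j1n o1] [j2 j2n o2]].
left; have [j12|j21|j12] := ltngtP j1 j2.
- by apply: (@determined_of_offset_gap j1 j2); lia.
- by apply: (@determined_of_offset_gap j2 j1); lia.
- by move: o1 o2; rewrite j12; lia.
Qed.

End NeighborRows.

Lemma neighbors_determined n d d' : ~~ odd n -> 6 <= n ->
  neighbors n d d' -> d <> d' -> determined n d d'.
Proof.
move=> n_even n_ge6 [r [r' [<- [<- [rect rect_dist]]]]] extdiff_neq.
have /andP[/and3P[r_latin r'_latin _] _] := rect.
have [rows_near cols_near] := rect_near_half n_even n_ge6 rect (eq_leq (esym rect_dist)).
have offset_near j : j < n -> n./2 - 1 <= offset n r r' j <= n./2 + 1.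
  by move=> jn; apply: (cols_near j jn 0).
have r_near : near_half n r by apply: rows_near; rewrite mem_head.
have r'_near : near_half n r' by apply: rows_near; rewrite !inE eqxx orbT.
case: (determined_or_const_offset n_even n_ge6 r_latin r'_latin r_near r'_near offset_near)
  => // const.
case: extdiff_neq; apply: extdiff_eq_const_offset const; rewrite ?latin_symbol_row //; lia.
Qed.

(* Here C_j = A_j +- 1 in every column. The sign depends only on the parity of
   the symbol A_j, and the step conditions on A and C exclude different signs
   for the two parities. *)
Section UnitOffset.
Variables (n : nat) (A C : seq nat).
Hypotheses (n_even : ~~ odd n) (n_ge6 : 6 <= n).
Hypotheses (A_latin : latin_row n A) (C_latin : latin_row n C).
Hypotheses (A_near : near_half n A) (C_near : near_half n C).
Hypothesis unit : forall j, j < n -> offset n A C j = 1 \/ offset n A C j = n.-1.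

Local Notation a j := (nth 0 A j).
Local Notation c j := (nth 0 C j).
Local Notation u := (offset n A C).

Lemma unit_offset_plus2 j k : j < n -> k < n -> u j = 1 -> a k = a j + 2 %[mod n] -> u k = 1.
Proof.
move=> jn kn uj; have n_wrap : 2 + n.-1 = 1 + n by lia.
move=> akj; case: (unit kn) => // uk.
have /andP[_ ajn] := latin_row_nth A_latin jn; have /andP[_ akn] := latin_row_nth A_latin kn.
have ckj : c k = c j.
  apply: eqmod_bounded (latin_row_nth C_latin kn) (latin_row_nth C_latin jn) _.
  rewrite /offset in uj uk; rewrite -(step_addmod (c k) akn) -(step_addmod (c j) ajn) uk uj.
  by rewrite -modnDml akj modnDml -addnA n_wrap addnA modnDr.
move: akj; rewrite (latin_row_nth_inj C_latin kn jn ckj) -{1}[a j]addn0 => /eqP.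
by rewrite eqn_modDl mod0n modn_small //; lia.
Qed.

Lemma unit_offset_even_gap j k : j < n -> k < n -> u j = 1 -> ~~ odd (a j + a k) -> u k = 1.
Proof.
move=> jn kn uj par.
suff plus_even d i : i < n -> u i = 1 -> a k = a i + d.*2 %[mod n] -> u k = 1.
  apply: (plus_even ((a k + n - a j)./2) j) => //.
  have /andP[_ ajn] := latin_row_nth A_latin jn.
  by rewrite (_ : a j + _ = a k + n) ?modnDr //; lia.
elim: d i => [|d IH] i ii ui; rewrite ?addn0 => aki.
  by rewrite (latin_row_nth_inj A_latin kn ii (eqmod_bounded (latin_row_nth A_latin kn)
    (latin_row_nth A_latin ii) aki)).
have next_range : 1 <= ((a i + 1) %% n).+1 <= n by rewrite ltn_pmod //; lia.
have [i'n ai'] := latin_row_index A_latin next_range.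
set i' := index _ A in i'n ai'.
have ai'_mod : a i' = a i + 2 %[mod n] by rewrite ai' -addn1 modnDml -addnA.
apply: (IH i') => //; first exact: unit_offset_plus2 ui ai'_mod.
by rewrite aki doubleS -add2n addnA -[in RHS]modnDml ai'_mod modnDml.
Qed.

Lemma unit_offset_parity j k : j < n -> k < n -> ~~ odd (a j + a k) -> u j = u k.
Proof.
move=> jn kn par; have := @unit_offset_even_gap j k jn kn.
have := @unit_offset_even_gap k j kn jn; rewrite addnC.
by have := unit jn; have := unit kn; lia.
Qed.

Local Notation p x := (index x A).

Lemma unit_offset_split : u (p 1) <> u (p 2) ->
  forall j k, j < n -> k < n -> odd (a j + a k) -> u j + u k = n.
Proof.
move=> neq j k jn kn par.
have [p1n a1] : p 1 < n /\ a (p 1) = 1 by apply: latin_row_index; lia.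
have [p2n a2] : p 2 < n /\ a (p 2) = 2 by apply: latin_row_index; lia.
have u_odd i : i < n -> odd (a i) -> u i = u (p 1).
  by move=> iS ai; apply: unit_offset_parity; rewrite ?a1 //; lia.
have u_even i : i < n -> ~~ odd (a i) -> u i = u (p 2).
  by move=> iS ai; apply: unit_offset_parity; rewrite ?a2 //; lia.
have := unit p1n; have := unit p2n.
by case: (boolP (odd (a j))) => aj;
  [rewrite (u_odd j) // (u_even k) | rewrite (u_even j) // (u_odd k)]; lia.
Qed.

Lemma unit_offset_square j : j.+1 < n ->
  [/\ n./2 - 1 <= step n (a j) (a j.+1) <= n./2 + 1,
      n./2 - 1 <= step n (c j) (c j.+1) <= n./2 + 1,
      odd (step n (a j) (a j.+1)) = odd (a j + a j.+1) &
      let x := step n (a j) (a j.+1) + u j.+1 in let y := u j + step n (c j) (c j.+1) in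
      x = y \/ x = y + n \/ y = x + n].
Proof.
move=> jn; have jn' := ltnW jn.
have [ajr aj1r] := (latin_row_nth A_latin jn', latin_row_nth A_latin jn).
have [cjr cj1r] := (latin_row_nth C_latin jn', latin_row_nth C_latin jn).
split; first by apply: A_near; rewrite (latin_row_size A_latin).
- by apply: C_near; rewrite (latin_row_size C_latin).
- exact: odd_step.
have n_pos : 0 < n by lia.
apply: eqmod_cases.
- have := step_lt (a j) (a j.+1) n_pos; have := step_lt (a j.+1) (c j.+1) n_pos.
  by rewrite /offset; lia.
- have := step_lt (a j) (c j) n_pos; have := step_lt (c j) (c j.+1) n_pos.
  by rewrite /offset; lia.
by rewrite /offset; apply: step_square; [case/andP: ajr | case/andP: aj1r | case/andP: cjr].
Qed.

Lemma unit_offset_odd_half : odd n./2 -> u (p 1) = u (p 2).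
Proof.
move=> h_odd; case: (eqVneq (u (p 1)) (u (p 2))) => // /eqP neq; exfalso.
have [p1n a1] : p 1 < n /\ a (p 1) = 1 by apply: latin_row_index; lia.
have [p2n a2] : p 2 < n /\ a (p 2) = 2 by apply: latin_row_index; lia.
suff same_parity j : j < n -> ~~ odd (a 0 + a j).
  by have := same_parity _ p1n; have := same_parity _ p2n; rewrite a1 a2; lia.
elim: j => [_|j IH jn]; first by rewrite addnn odd_double.
have {IH} := IH (ltnW jn); case: (boolP (odd (a j + a j.+1))) => par; last lia.
case: (unit_offset_square jn) => s_near s'_near s_odd /= sq.
have := unit_offset_split neq (ltnW jn) jn par.
by have := unit (ltnW jn); have := unit jn; lia.
Qed.

Lemma unit_offset_even_half : ~~ odd n./2 -> u (p 1) = u (p 2).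
Proof.
move=> h_even; case: (eqVneq (u (p 1)) (u (p 2))) => // /eqP neq; exfalso.
have [p1n a1] : p 1 < n /\ a (p 1) = 1 by apply: latin_row_index; lia.
have [p3n a3] : p 3 < n /\ a (p 3) = 3 by apply: latin_row_index; lia.
have invariant j : j < n -> a j + c j = a 0 + c 0 %[mod n].
  elim: j => [//|j IH jn]; rewrite -{}IH ?(ltnW jn) //.
  have /andP[_ ajn] := latin_row_nth A_latin (ltnW jn).
  have /andP[_ cjn] := latin_row_nth C_latin (ltnW jn).
  apply: step_sum_n => //; case: (unit_offset_square jn) => s_near s'_near s_odd /= sq.
  have := unit (ltnW jn); have := unit jn.
  case: (boolP (odd (a j + a j.+1))) => par.
    by have := unit_offset_split neq (ltnW jn) jn par; lia.
  by have := unit_offset_parity (ltnW jn) jn par; lia.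
have c_mod j : j < n -> c j = a j + u j %[mod n].
  by move=> jn; rewrite step_addmod //; case/andP: (latin_row_nth A_latin jn).
(* Symbols 1 and 3 carry the same offset u, so the invariant reads 2 + u = 6 + u. *)
have := invariant _ p1n; rewrite -(invariant _ p3n) -modnDmr c_mod // modnDmr.
rewrite -[in RHS]modnDmr c_mod // modnDmr a1 a3 (unit_offset_parity p3n p1n) ?a1 ?a3 //.
rewrite (_ : 3 + _ = 1 + (1 + u (p 1)) + 4); last lia.
by rewrite -{1}[1 + _]addn0 => /eqP; rewrite eqn_modDl mod0n modn_small //; lia.
Qed.

Lemma unit_offset_const : constant_on n (offset n A C).
Proof.
have [p1n a1] : p 1 < n /\ a (p 1) = 1 by apply: latin_row_index; lia.
have [p2n a2] : p 2 < n /\ a (p 2) = 2 by apply: latin_row_index; lia.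
have u12 : u (p 1) = u (p 2).
  by case: (boolP (odd n./2)) => [/unit_offset_odd_half | /unit_offset_even_half].
suff to_p1 j : j < n -> u j = u (p 1) by move=> j jn; rewrite !to_p1 //; lia.
move=> jn; case: (boolP (odd (a j))) => aj_odd.
  by apply: unit_offset_parity; rewrite ?a1 //; lia.
by rewrite u12; apply: unit_offset_parity; rewrite ?a2 //; lia.
Qed.

End UnitOffset.

Section OffsetPropagation.
Variables (n : nat) (A B C : seq nat).
Hypotheses (n_even : ~~ odd n) (n_ge6 : 6 <= n).
Hypotheses (A_latin : latin_row n A) (B_latin : latin_row n B) (C_latin : latin_row n C).
Hypotheses (A_near : near_half n A) (C_near : near_half n C).
Hypothesis AB_const : constant_on n (offset n A B).
Hypothesis AB_near : n./2 - 1 <= offset n A B 0 <= n./2 + 1.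
Hypothesis BC_near : forall j, j < n -> n./2 - 1 <= offset n B C j <= n./2 + 1.
Hypothesis AC_neq : forall j, j < n -> nth 0 A j <> nth 0 C j.

Lemma const_offset_next_half : offset n A B 0 = n./2 -> constant_on n (offset n B C).
Proof.
move=> AB_half; have n_pos : 0 < n by lia.
have rA := latin_row_nth A_latin; have rC := latin_row_nth C_latin.
have AC_unit j : j < n -> offset n A C j = 1 \/ offset n A C j = n.-1.
  move=> jn; have AC_ne0 : offset n A C j != 0.
    by rewrite /offset step_eq0 ?rA ?rC //; apply/eqP/AC_neq.
  have AC_lt : offset n A C j < n := step_lt _ _ n_pos.
  have := eqmod_cases _ _
    (@offset_add n A B C j (latin_symbol_row A_latin) (latin_symbol_row B_latin) jn).
  by have := AB_const jn; have := BC_near jn; lia.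
have AC_const := unit_offset_const n_even n_ge6 A_latin C_latin A_near C_near AC_unit.
move=> j jn; have := BC_near jn; have := BC_near n_pos => BC0 BCj.
apply: (eqmod_close (n := n)); [|lia|lia].
apply/eqP; rewrite -(eqn_modDl (offset n A B 0)); apply/eqP.
by rewrite -{1}(AB_const jn) !offset_add ?latin_symbol_row // AC_const.
Qed.

Lemma const_offset_next_off_half : offset n A B 0 != n./2 -> constant_on n (offset n B C).
Proof.
move=> AB_off; have n_pos : 0 < n by lia.
have window j : j < n -> n./2 - 1 <= offset n B C j <= n./2 - 1 + 2.
  by move=> jn; have := BC_near jn; lia.
case: (sum_window_spread window (sum_offset_latin B_latin C_latin)) => [//|].
move=> [[j1 j1n BC1] [j2 j2n BC2]]; exfalso.
have AC_eq j : j < n -> offset n A B j + offset n B C j = n -> nth 0 A j = nth 0 C j.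
  move=> jn AC_n; apply/eqP.
  rewrite -(@step_eq0 n) ?(latin_row_nth A_latin) ?(latin_row_nth C_latin) //; apply/eqP.
  have AC_lt : offset n A C j < n := step_lt _ _ n_pos.
  have := @offset_add n A B C j (latin_symbol_row A_latin) (latin_symbol_row B_latin) jn.
  by rewrite AC_n modnn modn_small // => <-.
have [AB0|AB0] : offset n A B 0 = n./2 - 1 \/ offset n A B 0 = n./2 + 1.
  by move/eqP: AB_off; lia.
- by apply: (AC_neq j2n); apply: AC_eq; rewrite ?AB_const // AB0 BC2; lia.
- by apply: (AC_neq j1n); apply: AC_eq; rewrite ?AB_const // AB0 BC1; lia.
Qed.

Lemma const_offset_next : constant_on n (offset n B C).
Proof.
case: (eqVneq (offset n A B 0) n./2) => [|]; first exact: const_offset_next_half.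
exact: const_offset_next_off_half.
Qed.

End OffsetPropagation.

Lemma row_product_diffrow n L i : row_product n L -> i < n ->
  diffrow n (nth [::] L i) = diffrow n (nth [::] L 0).
Proof.
case=> /andP[/eqP szL /andP[/allP L_latin _]] [d [d' [M [c [_ _ [szM M_rows _ M_diff _] L_M]]]]].
suff row_diff k : k < n -> diffrow n (nth [::] L k) = d by move=> iS; rewrite !row_diff //; lia.
move=> kn; have Mk : nth [::] M k \in M by rewrite mem_nth ?szM.
have Lk_latin : latin_row n (nth [::] L k) by apply/L_latin/mem_nth; rewrite szL.
have Mk_row := allP M_rows _ Mk.
rewrite -(eqP (allP M_diff _ Mk)); symmetry.
apply/(diffrow_eq_const_offset Mk_row (latin_symbol_row Lk_latin)).
have shift j : j < n -> offset n (nth [::] M k) (nth [::] L k) j = c %% n.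
  by move=> jn; apply: step_of_eqmod (L_M _ _ kn jn); case/andP: (symbol_row_nth Mk_row jn).
by move=> j jn; rewrite !shift //; lia.
Qed.

Lemma iff_path_all m (P : nat -> Prop) i0 : i0 < m -> P i0 ->
  (forall i, i.+1 < m -> P i <-> P i.+1) -> forall i, i < m -> P i.
Proof.
move=> i0m Pi0 P_step.
have P_0 i : i < m -> P i <-> P 0.
  elim: i => [//|i IH] im.
  exact: iff_trans (iff_sym (P_step i im)) (IH (ltnW im)).
by move=> i im; apply/(P_0 i im)/(P_0 i0 i0m).
Qed.

Section LatinSquare.
Variables (n : nat) (L : seq (seq nat)).
Hypotheses (n_even : ~~ odd n) (n_ge6 : 6 <= n).
Hypotheses (L_square : latin_square n L) (L_dist : n./2 - 1 <= rect_innerdist n L).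

Local Notation row i := (nth [::] L i).

Lemma square_size : size L = n.
Proof. by case/andP: L_square => /eqP. Qed.

Lemma square_row_latin i : i < n -> latin_row n (row i).
Proof.
by move=> iS; case/and3P: L_square => _ /allP L_latin _; apply/L_latin/mem_nth; rewrite square_size.
Qed.

Lemma square_row_symbol i : i < n -> symbol_row n (row i).
Proof. by move=> iS; apply/latin_symbol_row/square_row_latin. Qed.

Lemma square_col_nth j i : i < n -> nth 0 (Defs.col L j) i = nth 0 (row i) j.
Proof. by move=> iS; rewrite (nth_map [::]) ?square_size. Qed.

Lemma square_col_uniq j : j < n -> uniq (Defs.col L j).
Proof. by move=> jn; case/and3P: L_square => _ _ /allP; apply; rewrite mem_iota. Qed.

Lemma square_col_latin j : j < n -> latin_row n (Defs.col L j).
Proof.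
move=> jn; apply: latin_row_of_uniq; rewrite ?size_map ?square_size ?square_col_uniq // => i iS.
by rewrite square_col_nth //; exact: (latin_row_nth (square_row_latin iS) jn).
Qed.

Lemma square_col_neq i i' j : i < n -> i' < n -> i <> i' -> j < n ->
  nth 0 (row i) j <> nth 0 (row i') j.
Proof.
move=> iS i'S neq jn; rewrite -!square_col_nth //.
by move/(latin_row_nth_inj (square_col_latin jn) iS i'S).
Qed.

Lemma square_row_near i : i < n -> near_half n (row i).
Proof.
move=> iS; apply: (rect_near_half n_even n_ge6 (andP L_square).2 L_dist).1.
by rewrite mem_nth ?square_size.
Qed.

Lemma square_offset_near i j : i.+1 < n -> j < n ->
  n./2 - 1 <= offset n (row i) (row i.+1) j <= n./2 + 1.
Proof.
move=> iS jn; have iS' := ltnW iS.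
have := (rect_near_half n_even n_ge6 (andP L_square).2 L_dist).2 j jn i.
by rewrite size_map square_size !square_col_nth // => /(_ iS).
Qed.

Lemma square_offset_near_swap i j : i.+1 < n -> j < n ->
  n./2 - 1 <= offset n (row i.+1) (row i) j <= n./2 + 1.
Proof.
move=> iS jn; rewrite offset_swap ?square_row_symbol ?(ltnW iS) //; last first.
  by apply: square_col_neq; lia.
by have := square_offset_near iS jn; lia.
Qed.

Lemma square_const_offset_succ i : i.+2 < n ->
  constant_on n (offset n (row i) (row i.+1)) <-> constant_on n (offset n (row i.+1) (row i.+2)).
Proof.
move=> iS; have iS1 := ltnW iS; have iS0 := ltnW iS1; have n_pos : 0 < n by lia.
split=> const.
  exact: (const_offset_next n_even n_ge6 (square_row_latin iS0) (square_row_latin iS1)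
    (square_row_latin iS) (square_row_near iS0) (square_row_near iS) const
    (square_offset_near iS1 n_pos) (fun j => square_offset_near iS)
    (fun j => square_col_neq iS0 iS ltac:(lia))).
apply: const_offset_swap (square_row_symbol iS1) (square_row_symbol iS0)
  (fun j => square_col_neq iS1 iS0 ltac:(lia)) _.
have AB_const := const_offset_swap (square_row_symbol iS1) (square_row_symbol iS)
  (fun j => square_col_neq iS1 iS ltac:(lia)) const.
exact: (const_offset_next n_even n_ge6 (square_row_latin iS) (square_row_latin iS1)
  (square_row_latin iS0) (square_row_near iS) (square_row_near iS0) AB_const
  (square_offset_near_swap iS n_pos) (fun j => square_offset_near_swap iS1)
  (fun j => square_col_neq iS iS0 ltac:(lia))).
Qed.

Lemma square_const_offsets i0 : i0.+1 < n -> constant_on n (offset n (row i0) (row i0.+1)) ->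
  forall i, i.+1 < n -> constant_on n (offset n (row i) (row i.+1)).
Proof.
move=> i0S const i iS.
pose P i := constant_on n (offset n (row i) (row i.+1)).
apply: (@iff_path_all n.-1 P i0) => //; try lia.
by move=> k kS; apply: square_const_offset_succ; lia.
Qed.

Lemma square_row_product :
  (forall i, i.+1 < n -> constant_on n (offset n (row i) (row i.+1))) -> row_product n L.
Proof.
move=> const; have n_pos : 0 < n by lia.
set e := nth 0 (row 0) 0.
have e_range : 1 <= e <= n := latin_row_nth (square_row_latin n_pos) n_pos.
have row_size i : i < n -> size (row i) = n.
  by move=> iS; exact: latin_row_size (square_row_latin iS).
have rows_diff i : i < n -> diffrow n (row i) = diffrow n (row 0).
  elim: i => [//|i IH] iS; rewrite -IH ?(ltnW iS) //; symmetry.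
  exact/(diffrow_eq_const_offset (square_row_symbol (ltnW iS)) (square_row_symbol iS))/const.
have cols_diff j : j < n -> diffrow n (Defs.col L j) = diffrow n (Defs.col L 0).
  move=> jn; apply: (@eq_from_nth _ 0) => [|i]; rewrite !size_mkseq ?size_map // square_size => iS.
  rewrite !nth_mkseq ?size_map ?square_size // !square_col_nth; try lia.
  exact: (const i ltac:(lia) j jn).
split=> //; exists (diffrow n (row 0)), (diffrow n (Defs.col L 0)),
  [seq map (normalize n e) r | r <- L], (e - 1); split.
- by exists (row 0); split=> //; apply: square_row_latin.
- by exists (Defs.col L 0); split=> //; apply: square_col_latin.
- split.
  + by rewrite size_map square_size.
  + apply/allP=> _ /mapP[r /(nthP [::])[i iS <-] ->]; rewrite square_size in iS.
    exact: normalize_symbol_row (row_size i iS).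
  + rewrite /entry (nth_map [::]) ?square_size // (nth_map 0) ?row_size //.
    by rewrite /normalize /step addKn modnn.
  + apply/allP=> _ /mapP[r /(nthP [::])[i iS <-] ->]; rewrite square_size in iS.
    by rewrite diffrow_normalize ?square_row_symbol ?rows_diff.
  + apply/allP=> j; rewrite mem_iota => /andP[_ jn].
    have -> : Defs.col [seq map (normalize n e) r | r <- L] j = map (normalize n e) (Defs.col L j).
      rewrite /Defs.col -!map_comp; apply/eq_in_map => _ /(nthP [::])[i iS <-] /=.
      by rewrite (nth_map 0) // row_size // -square_size.
    by rewrite diffrow_normalize ?cols_diff ?latin_symbol_row ?square_col_latin.
- move=> i j iS jn; rewrite /entry (nth_map [::]) ?square_size // (nth_map 0) ?row_size //.
  exact: normalize_eqmod.
Qed.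

Lemma square_row_product_of_diffrow i : 1 <= i <= n - 1 ->
  diffrow n (row i.-1) = diffrow n (row i) -> row_product n L.
Proof.
move=> i_range same; apply: square_row_product; apply: (@square_const_offsets i.-1); first lia.
rewrite prednK; last lia.
apply/(diffrow_eq_const_offset (square_row_symbol _) (square_row_symbol _)); rewrite ?same //.
all: lia.
Qed.

End LatinSquare.

Theorem mainTheorem8 (n : nat) : ~~ odd n -> 6 <= n ->
  (forall d d' : seq int, is_edr n d -> is_edr n d' ->
     neighbors n d d' -> d <> d' -> determined n d d') /\
  (forall L : seq (seq nat), latin_square n L ->
     rect_innerdist n L = n./2 - 1 ->
     (row_product n L <->
      exists i, 1 <= i <= n - 1 /\
        diffrow n (nth [::] L i.-1) = diffrow n (nth [::] L i))).
Proof.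
move=> n_even n_ge6; split=> [d d' _ _|L L_square L_dist].
  (* The is_edr hypotheses are implied by neighbors. *)
  exact: neighbors_determined.
have L_near : n./2 - 1 <= rect_innerdist n L by rewrite L_dist.
split=> [L_prod | [i [i_range same]]].
  by exists 1; split; [lia | rewrite !(row_product_diffrow L_prod) //; lia].
exact: square_row_product_of_diffrow L_near _ i_range same.
Qed.
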